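(* Let $A$ be a $3$-dimensional zeropotent algebra over a field $K$ with $\mathrm{char}(K)\neq2$ whose structural matrix has rank at least $2$. Then every weak multiplier of $A$ is a scalar multiplication $S_a:x\mapsto ax$ for some $a\in K$; that is, $M(A)=M'(A)=LM(A)=LM'(A)=\{S_a: a\in K\}$.
   Context: $A$ is zeropotent if $x^2=0$ for all $x\in A$. Given a basis $\{e,f,g\}$, write $fg=a_{11}e+a_{12}f+a_{13}g$, $ge=a_{21}e+a_{22}f+a_{23}g$, $ef=a_{31}e+a_{32}f+a_{33}g$; the structural matrix is $(a_{ij})$ (rank $\ge 2$ means at least two of $fg,ge,ef$ are linearly independent). A map $T:A\to A$ (not assumed linear) is a weak multiplier if $xT(y)=T(x)y$ for all $x,y$, a multiplier if $xT(y)=T(xy)=T(x)y$ for all $x,y$; $M(A)$, $M'(A)$ are the sets of multipliers and weak multipliers and $LM(A)$, $LM'(A)$ their linear elements. *)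

From HB Require Import structures.
From mathcomp Require Import all_boot all_order all_algebra.
Set Implicit Arguments. Unset Strict Implicit. Unset Printing Implicit Defensive.
Import GRing.Theory.
Local Open Scope ring_scope.

Section Defs.
Variables (K : fieldType) (V : vectType K).

Definition bilinear_mul (mul : V -> V -> V) : Prop :=
  (forall (a : K) (x y z : V), mul (a *: x + y) z = a *: mul x z + mul y z) /\
  (forall (a : K) (x y z : V), mul z (a *: x + y) = a *: mul z x + mul z y).

Definition zeropotent (mul : V -> V -> V) : Prop := forall x : V, mul x x = 0.

Definition struct_mx (mul : V -> V -> V) (e f g : V) : 'M[K]_3 :=
  let b := [tuple e; f; g] in
  let p := [tuple mul f g; mul g e; mul e f] in
  \matrix_(i < 3, j < 3) coord b j (tnth p i).

(* Maps A -> A, not assumed linear. *)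
Definition weak_multiplier (mul : V -> V -> V) (T : V -> V) : Prop :=
  forall x y : V, mul x (T y) = mul (T x) y.

Definition multiplier (mul : V -> V -> V) (T : V -> V) : Prop :=
  forall x y : V, mul x (T y) = T (mul x y) /\ T (mul x y) = mul (T x) y.

Definition linear_map (T : V -> V) : Prop :=
  forall (a : K) (x y : V), T (a *: x + y) = a *: T x + T y.

Definition scalar_map (a : K) : V -> V := fun x => a *: x.

End Defs.

(* In the coordinates of the basis (e, f, g) the product becomes xy = (x × y) M,
   with × the cross product and M the structural matrix.  For a weak multiplier T,
   every x × Ty - Tx × y therefore lies in ker M, which has dimension at most 1,
   hence in a line K k.  Crossing with k and expanding (a × b) × k = (a·k) b - (b·k) a
   gives, for the linear form l x = x·k, the identity
     l(x) Ty - l(Ty) x = l(Tx) y - l(y) Tx.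
   With x = y and char K <> 2 it shows Tz ∈ Kz whenever l(z) <> 0, and with x = z it
   shows Ty - t_z y ∈ Kz for every y.  Two non-proportional z with l(z) <> 0 force a
   common t_z = t and Ty - t y ∈ Kz1 ∩ Kz2 = 0. *)

From HB Require Import structures.
From mathcomp Require Import all_boot all_order all_algebra.
From mathcomp Require Import ring.
From Stdlib Require Import FunctionalExtensionality.
Import GRing.Theory.
Set Implicit Arguments. Unset Strict Implicit. Unset Printing Implicit Defensive.
Local Open Scope ring_scope.

Section BilinearProduct.
Variables (K : fieldType) (V : vectType K) (mul : V -> V -> V).
Hypothesis mul_bilinear : bilinear_mul mul.

Lemma bmulDl x y z : mul (x + y) z = mul x z + mul y z.
Proof. by have := mul_bilinear.1 1 x y z; rewrite !scale1r. Qed.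

Lemma bmulDr x y z : mul z (x + y) = mul z x + mul z y.
Proof. by have := mul_bilinear.2 1 x y z; rewrite !scale1r. Qed.

Lemma bmul0l z : mul 0 z = 0.
Proof. by apply: (addrI (mul 0 z)); rewrite addr0 -bmulDl addr0. Qed.

Lemma bmul0r z : mul z 0 = 0.
Proof. by apply: (addrI (mul z 0)); rewrite addr0 -bmulDr addr0. Qed.

Lemma bmulZl a x z : mul (a *: x) z = a *: mul x z.
Proof. by have := mul_bilinear.1 a x 0 z; rewrite !addr0 bmul0l addr0. Qed.

Lemma bmulZr a x z : mul z (a *: x) = a *: mul z x.
Proof. by have := mul_bilinear.2 a x 0 z; rewrite !addr0 bmul0r addr0. Qed.

Hypothesis mul_zeropotent : zeropotent mul.

Lemma bmul_anticomm x y : mul y x = - mul x y.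
Proof.
apply/eqP; rewrite -addr_eq0 addrC.
have := mul_zeropotent (x + y).
by rewrite bmulDl !bmulDr !mul_zeropotent addr0 (add0r (mul x y)) => ->.
Qed.

End BilinearProduct.

Lemma subr_swap (M : zmodType) (a b c d : M) : a - b = c - d -> a - c = b - d.
Proof. by move=> h; rewrite -[a](subrK b) h addrC addrA addKr addrC. Qed.

Section ScalarMaps.
Variables (K : fieldType) (V : vectType K) (l : V -> K) (T : V -> V).
Hypothesis two_neq0 : (2 : K) != 0.
Hypothesis T_identity :
  forall x y, l x *: T y - l (T y) *: x = l (T x) *: y - l y *: T x.

Lemma identity_diag z : l z *: T z = l (T z) *: z.
Proof.
have : (2 : K) *: (l z *: T z - l (T z) *: z) = 0.
  by rewrite scaler_nat mulr2n {2}T_identity subrKA subrr.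
by move/eqP; rewrite scaler_eq0 (negPf two_neq0) subr_eq0 => /eqP.
Qed.

Lemma T_eigen z : l z != 0 -> T z = (l (T z) / l z) *: z.
Proof. by move=> lz; apply: (scalerI lz); rewrite identity_diag scalerA mulrC divfK. Qed.

Lemma T_sub_scale_in_line z y : l z != 0 -> T y - (l (T z) / l z) *: y \in <[z]>%VS.
Proof.
move=> lz; have Tz := T_eigen lz.
have : l z *: T y - l (T z) *: y \in <[z]>%VS.
  rewrite (subr_swap (T_identity z y)) rpredB ?memvZ ?memv_line //.
  by rewrite Tz memvZ ?memv_line.
move/(memvZ (l z)^-1); rewrite scalerBr !scalerA mulVf // scale1r.
by rewrite mulrC.
Qed.

Lemma T_scalar_of_two_lines z1 z2 :
  l z1 != 0 -> l z2 != 0 -> z2 \notin <[z1]>%VS -> exists t, forall x, T x = t *: x.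
Proof.
move=> lz1 lz2 z2n1; set t1 := l (T z1) / l z1; set t2 := l (T z2) / l z2.
have lines_meet0 w : w \in <[z1]>%VS -> w \in <[z2]>%VS -> w = 0.
  move=> w1 /vlineP [a wa]; move: w1; rewrite wa rpredZeq (negPf z2n1) orbF.
  by move/eqP->; rewrite scale0r.
have t21 : t2 = t1.
  apply/eqP; rewrite -subr_eq0; apply/eqP.
  have := T_sub_scale_in_line z2 lz1; rewrite [T z2]T_eigen // -scalerBl.
  by rewrite rpredZeq (negPf z2n1) orbF => /eqP.
exists t1 => x; apply/eqP; rewrite -subr_eq0; apply/eqP; apply: lines_meet0.
  exact: T_sub_scale_in_line.
by rewrite -t21; apply: T_sub_scale_in_line.
Qed.

End ScalarMaps.

Lemma exists_nonvanishing_off_line (K : fieldType) (V : vectType K) (l : V -> K) z :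
  {morph l : u v / u + v} -> (1 < \dim (fullv : {vspace V}))%N -> l z != 0 ->
  exists2 w, l w != 0 & w \notin <[z]>%VS.
Proof.
move=> lD dimV lz.
have [w _ wz] : exists2 w, w \in fullv & w \notin <[z]>%VS.
  apply/subvPn; apply: contraTN dimV => /dimvS le_full_line.
  by rewrite -leqNgt (leq_trans le_full_line) // dim_vline leq_b1.
have [lw | /negbNE/eqP lw0] := boolP (l w != 0); first by exists w.
exists (w + z); first by rewrite lD lw0 add0r.
by rewrite rpredDr ?memv_line.
Qed.

Lemma kermx_sub_line (F : fieldType) m n (M : 'M[F]_(m.+1, n)) :
  (\rank (kermx M) <= 1)%N -> exists2 k : 'rV_m.+1, k != 0 & (kermx M <= k)%MS.
Proof.
move=> rk; have [-> | nz] := eqVneq (kermx M) 0.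
  exists (const_mx 1); last exact: sub0mx.
  by apply/eqP => /rowP/(_ 0); rewrite !mxE; apply/eqP; exact: oner_neq0.
exists (nz_row (kermx M)); first by rewrite nz_row_eq0.
have [le_rk rk_eq] := mxrank_leqif_sup (nz_row_sub (kermx M)).
by rewrite -rk_eq eqn_leq le_rk rank_rV nz_row_eq0 nz.
Qed.

(* Explicit ordinals of ['I_3]: the ring literals [1] and [2] of ['I_3] do not
   reduce to [Ordinal]s, which [/=] and [ring] rely on. *)
Notation i0 := (@Ordinal 3 0 isT).
Notation i1 := (@Ordinal 3 1 isT).
Notation i2 := (@Ordinal 3 2 isT).

Lemma sum3E (W : nmodType) (F : 'I_3 -> W) : \sum_(i < 3) F i = F i0 + F i1 + F i2.
Proof. by rewrite !big_ord_recr big_ord0 /= add0r; congr (F _ + F _ + F _); apply: val_inj. Qed.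

Lemma row3P (R : Type) (u v : 'rV[R]_3) :
  u 0 i0 = v 0 i0 -> u 0 i1 = v 0 i1 -> u 0 i2 = v 0 i2 -> u = v.
Proof.
by move=> h0 h1 h2; apply/rowP; case=> [[|[|[|//]]] lti]; rewrite (bool_irrelevance lti isT).
Qed.

Section CrossProduct.
Variable R : comNzRingType.
Implicit Types u v w : 'rV[R]_3.

Definition cross u v : 'rV[R]_3 :=
  \row_k [:: u 0 i1 * v 0 i2 - u 0 i2 * v 0 i1;
             u 0 i2 * v 0 i0 - u 0 i0 * v 0 i2;
             u 0 i0 * v 0 i1 - u 0 i1 * v 0 i0]`_k.

Definition dot u v : R := \sum_i u 0 i * v 0 i.

Lemma dotDl u v w : dot (u + v) w = dot u w + dot v w.
Proof. by rewrite /dot -big_split; apply: eq_bigr => i _; rewrite mxE mulrDl. Qed.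

Lemma crossBl u v w : cross (u - v) w = cross u w - cross v w.
Proof. by apply: row3P; rewrite !mxE /=; ring. Qed.

Lemma cross_scale_self a w : cross (a *: w) w = 0.
Proof. by apply: row3P; rewrite !mxE /=; ring. Qed.

Lemma dot_deltal i v : dot (delta_mx 0 i) v = v 0 i.
Proof.
rewrite /dot (bigD1 i) //= big1 => [|j ji]; first by rewrite mxE !eqxx mul1r addr0.
by rewrite mxE (negPf ji) andbF mul0r.
Qed.

Lemma cross_crossl u v w : cross (cross u v) w = dot u w *: v - dot v w *: u.
Proof. by apply: row3P; rewrite /dot !sum3E !mxE /=; ring. Qed.

End CrossProduct.

Section Coordinates.
Variables (K : fieldType) (V : vectType K) (e f g : V).
Hypothesis efg_basis : basis_of fullv [:: e; f; g].

Definition coords (x : V) : 'rV[K]_3 := \row_i coord [tuple e; f; g] i x.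

Fact coords_is_linear : linear coords.
Proof. by move=> a x y; apply/rowP => i; rewrite !mxE linearP. Qed.

HB.instance Definition _ := GRing.isLinear.Build K V 'rV[K]_3 _ coords coords_is_linear.

Lemma coords_expand x : x = coords x 0 i0 *: e + coords x 0 i1 *: f + coords x 0 i2 *: g.
Proof. by rewrite {1}(coord_basis efg_basis (memvf x)) sum3E !mxE. Qed.

Lemma coords_inj : injective coords.
Proof. by move=> x y exy; rewrite (coords_expand x) (coords_expand y) exy. Qed.

Lemma coords_basis (i : 'I_3) : coords [tuple e; f; g]`_i = delta_mx 0 i.
Proof. by apply/rowP => j; rewrite !mxE coord_free ?(basis_free efg_basis) // eq_sym. Qed.

Variable mul : V -> V -> V.
Hypotheses (mul_bilinear : bilinear_mul mul) (mul_zeropotent : zeropotent mul).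

Lemma coords_mul x y : coords (mul x y) = cross (coords x) (coords y) *m struct_mx mul e f g.
Proof.
have anti := bmul_anticomm mul_bilinear mul_zeropotent.
apply/rowP => j; rewrite [in LHS]mxE.
rewrite [in mul x y](coords_expand x) [in mul _ y](coords_expand y).
rewrite !(bmulDl mul_bilinear, bmulDr mul_bilinear, bmulZl mul_bilinear, bmulZr mul_bilinear).
rewrite !mul_zeropotent (anti e f) (anti f g) (anti g e).
by rewrite !mxE sum3E !mxE !(tnth_nth 0) /= !linearD !linearZ !linearN !linear0 /=; ring.
Qed.

Variable k : 'rV[K]_3.
Hypothesis ker_sub_k : (kermx (struct_mx mul e f g) <= k)%MS.

Lemma weak_multiplier_identity T : weak_multiplier mul T ->
  forall x y, dot (coords x) k *: T y - dot (coords (T y)) k *: x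
            = dot (coords (T x)) k *: y - dot (coords y) k *: T x.
Proof.
move=> wT x y; apply: coords_inj; rewrite !linearB !linearZ /= !scalerN -!cross_crossl.
apply/eqP; rewrite -subr_eq0 -crossBl.
set d := _ - _; have /sub_rVP [a ->] : (d <= k)%MS.
  apply: submx_trans ker_sub_k; apply/sub_kermxP.
  by rewrite mulmxBl -!coords_mul wT subrr.
by rewrite cross_scale_self.
Qed.

End Coordinates.

Section Multipliers.
Variables (K : fieldType) (V : vectType K) (mul : V -> V -> V).
Hypotheses (mul_bilinear : bilinear_mul mul) (mul_zeropotent : zeropotent mul).

Lemma weak_multiplier_scalar (e f g : V) T :
  (2 : K) != 0 -> \dim (fullv : {vspace V}) = 3%N ->
  basis_of fullv [:: e; f; g] -> (2 <= \rank (struct_mx mul e f g))%N ->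
  weak_multiplier mul T -> exists a, T = scalar_map a.
Proof.
move=> two_neq0 dimV efg_basis rankM wT.
have [k k_neq0 ker_sub_k] :
    exists2 k : 'rV[K]_3, k != 0 & (kermx (struct_mx mul e f g) <= k)%MS.
  by apply: kermx_sub_line; rewrite mxrank_ker leq_subLR addn1.
pose l x := dot (coords e f g x) k.
have lD : {morph l : u v / u + v} by move=> u v; rewrite /l linearD dotDl.
have [i ki] : exists i, k 0 i != 0.
  apply/existsP; apply: contraNT k_neq0 => /existsPn k0.
  by apply/eqP/rowP => i; rewrite mxE; apply/eqP/negbNE.
have lz1 : l [tuple e; f; g]`_i != 0 by rewrite /l coords_basis // dot_deltal.
have dim_gt1 : (1 < \dim (fullv : {vspace V}))%N by rewrite dimV.
have [z2 lz2 z21] := exists_nonvanishing_off_line lD dim_gt1 lz1.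
have [t Tt] := T_scalar_of_two_lines two_neq0
  (weak_multiplier_identity efg_basis mul_bilinear mul_zeropotent ker_sub_k wT) lz1 lz2 z21.
by exists t; apply: functional_extensionality.
Qed.

Lemma multiplier_weak T : multiplier mul T -> weak_multiplier mul T.
Proof. by move=> mT x y; rewrite (mT x y).1 (mT x y).2. Qed.

Lemma scalar_map_multiplier a : multiplier mul (scalar_map a).
Proof. by move=> x y; rewrite /scalar_map bmulZl ?bmulZr. Qed.

Lemma scalar_map_linear a : linear_map (@scalar_map K V a).
Proof. by move=> b x y; rewrite /scalar_map scalerDr !scalerA mulrC. Qed.

End Multipliers.

Theorem theorem7p2 (K : fieldType) (V : vectType K) (mul : V -> V -> V) :
  ~~ (2%N \in [pchar K]) ->
  \dim (fullv : {vspace V}) = 3%N ->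
  bilinear_mul mul ->
  zeropotent mul ->
  (exists e f g : V,
      basis_of fullv [:: e; f; g] /\ (2 <= \rank (struct_mx mul e f g))%N) ->
  (forall T : V -> V, multiplier mul T <-> exists a : K, T = scalar_map a) /\
  (forall T : V -> V, weak_multiplier mul T <-> exists a : K, T = scalar_map a) /\
  (forall T : V -> V, (multiplier mul T /\ linear_map T) <-> exists a : K, T = scalar_map a) /\
  (forall T : V -> V, (weak_multiplier mul T /\ linear_map T) <-> exists a : K, T = scalar_map a).
Proof.
move=> char2 dimV mul_bilinear mul_zeropotent [e [f [g [efg_basis rankM]]]].
have two_neq0 : (2 : K) != 0 by apply: contraNneq char2 => two0; rewrite inE /= two0 eqxx.
have weak_scalar :=
  weak_multiplier_scalar mul_bilinear mul_zeropotent two_neq0 dimV efg_basis rankM.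
have scalar_mult T : (exists a, T = scalar_map a) -> multiplier mul T /\ linear_map T.
  move=> [a ->]; split; first exact: (scalar_map_multiplier mul_bilinear a).
  exact: scalar_map_linear.
split; [|split; [|split]] => T; split.
- by move/multiplier_weak/weak_scalar.
- by case/scalar_mult.
- exact: weak_scalar.
- by case/scalar_mult => /multiplier_weak.
- by case=> /multiplier_weak /weak_scalar.
- exact: scalar_mult.
- by case=> /weak_scalar.
- by case/scalar_mult => /multiplier_weak.
Qed.
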